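(* Let $n\ge1$, $m\ge0$, $\Phi(\mathbf t;\mathbf y)=\sum_{k=0}^m t_k p_{k+1}(\mathbf y)$, and let $\mathbf u(\mathbf t)=(u_1,\dots,u_n)$ be a $C^1$ map on an open set of parameters $\mathbf t=(t_0,\dots,t_m)$ such that $\frac{\partial\Phi}{\partial y_i}(\mathbf t;\mathbf u(\mathbf t))=0$ for $i=1,\dots,n$. Assume $\Phi_{i,j}:=\frac{\partial^2\Phi}{\partial y_i\partial y_j}(\mathbf t;\mathbf u(\mathbf t))\neq0$ for all $i,j\in\{1,\dots,n\}$ with $i+j>n$. Then for every $k=1,\dots,m$, \[ \frac{\partial \mathbf u}{\partial t_k}={\sf A}_k(\mathbf u)\,\frac{\partial \mathbf u}{\partial t_0}, \] where ${\sf A}_k(\mathbf u)$ is the upper triangular Toeplitz $n\times n$ matrix with entries $({\sf A}_k)_{i,j}=p_{k-j+i}(\mathbf u)$ for $i\le j$ and $({\sf A}_k)_{i,j}=0$ for $i>j$. In particular ${\sf A}_1$ is the Jordan block with $u_1$ on the diagonal and $1$ on the first superdiagonal.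
   Context: The elementary Schur polynomials $p_k(\mathbf y)$, $\mathbf y=(y_1,\dots,y_n)$, are defined by $\exp\big(\sum_{i=1}^n y_i z^i\big)=\sum_{k\ge 0}p_k(\mathbf y)z^k$, with the convention $p_k=0$ for $k<0$ (so $p_0=1$, $p_1=y_1$). *)

From Stdlib Require Import Reals.
From mathcomp Require Import all_boot.
Set Implicit Arguments. Unset Strict Implicit. Unset Printing Implicit Defensive.

Local Open Scope R_scope.

(* Coordinates are 0-based: y : 'I_n -> R, the paper's y_{i} is y (i-1). *)

(* Elementary Schur polynomial p_k(y), k >= 0: the coefficient of z^k in
   exp(sum_{i=1}^n y_i z^i) = prod_i sum_a (y_i z^i)^a / a!, i.e.
   p_k(y) = sum over multi-indices (a_1..a_n) with sum_i i a_i = k of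
            prod_i y_i^{a_i} / a_i!.
   (Each a_i <= k, so bounding a_i by 'I_(k+1) loses nothing.) *)
Definition schur_p (n k : nat) (y : 'I_n -> R) : R :=
  \big[Rplus/0]_(a : {ffun 'I_n -> 'I_k.+1} |
                   (\sum_(i < n) i.+1 * a i)%N == k)
     \big[Rmult/1]_(i < n) (y i ^ (a i) / INR (Stdlib.Arith.Factorial.fact (a i))).

Definition Phi (m n : nat) (t : 'I_m.+1 -> R) (y : 'I_n -> R) : R :=
  \big[Rplus/0]_(k < m.+1) (t k * schur_p k.+1 y).

Definition upd (d : nat) (x : 'I_d -> R) (i : 'I_d) (s : R) : 'I_d -> R :=
  fun j => if j == i then s else x j.

Definition is_partial (d : nat) (f : ('I_d -> R) -> R) (i : 'I_d)
  (x : 'I_d -> R) (l : R) : Prop :=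
  derivable_pt_lim (fun s => f (upd x i s)) (x i) l.

Definition is_open (d : nat) (U : ('I_d -> R) -> Prop) : Prop :=
  forall t, U t -> exists eps, 0 < eps /\
    forall s, (forall k, Rabs (s k - t k) < eps) -> U s.

Definition cont_on (d : nat) (U : ('I_d -> R) -> Prop) (f : ('I_d -> R) -> R)
  : Prop :=
  forall t, U t -> forall eps, 0 < eps -> exists delta, 0 < delta /\
    forall s, U s -> (forall k, Rabs (s k - t k) < delta) ->
      Rabs (f s - f t) < eps.

Definition Amat (n k : nat) (y : 'I_n -> R) (i j : 'I_n) : R :=
  if ((i <= j) && (j - i <= k))%N then schur_p (k - (j - i)) y else 0.

From Stdlib Require Import Factorial Reals Lra FunctionalExtensionality.
From HB Require Import structures.
From mathcomp Require Import all_boot zify.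

(* Put c_d(t, y) := sum_k t_k p_(k+1-d)(y).  Since dp_k/dy_i = p_(k-i), every
   y-derivative of Phi of total weight d (y_i having weight i) equals c_d.  On
   the critical curve therefore c_d(t, u(t)) = 0 for 1 <= d <= n, and the
   Hessian H = (c_(i+j)) is a Hankel matrix vanishing above its antidiagonal,
   where it equals c_(n+1) <> 0; so H is invertible.  Differentiating the
   critical equations in t_k gives H du/dt_k = -(p_(k+1-i)(u))_i, in particular
   H du/dt_0 = -e_1.  Since H A_k is symmetric,
   H A_k du/dt_0 = A_k^T H du/dt_0 = -A_k^T e_1 = -(p_(k+1-i)(u))_i,
   and invertibility of H gives du/dt_k = A_k du/dt_0. *)

Set Implicit Arguments.
Unset Strict Implicit.
Unset Printing Implicit Defensive.

Local Open Scope R_scope.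

Lemma RplusA : associative Rplus. Proof. by move=> x y z; rewrite Rplus_assoc. Qed.
Lemma RmultA : associative Rmult. Proof. by move=> x y z; rewrite Rmult_assoc. Qed.

HB.instance Definition _ :=
  Monoid.isComLaw.Build R 0 Rplus RplusA Rplus_comm Rplus_0_l.
HB.instance Definition _ :=
  Monoid.isComLaw.Build R 1 Rmult RmultA Rmult_comm Rmult_1_l.
HB.instance Definition _ := Monoid.isMulLaw.Build R 0 Rmult Rmult_0_l Rmult_0_r.
HB.instance Definition _ :=
  Monoid.isAddLaw.Build R Rmult Rplus Rmult_plus_distr_r Rmult_plus_distr_l.

Lemma derivable_pt_lim_eq (f g : R -> R) x l l' :
  f =1 g -> l = l' -> derivable_pt_lim f x l -> derivable_pt_lim g x l'.
Proof. by move=> fg <-; apply: derivable_pt_lim_ext. Qed.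

Lemma derivable_pt_lim_big_plus (I : Type) (r : seq I) (P : pred I)
    (f : I -> R -> R) (f' : I -> R) x :
  (forall i, P i -> derivable_pt_lim (f i) x (f' i)) ->
  derivable_pt_lim (fun s => \big[Rplus/0]_(i <- r | P i) f i s) x
                   (\big[Rplus/0]_(i <- r | P i) f' i).
Proof.
move=> df; elim: r => [|j r IH].
  by apply: (derivable_pt_lim_eq _ _ (derivable_pt_lim_const 0 x)) => [s|];
    rewrite big_nil.
rewrite big_cons; case: (boolP (P j)) => Pj.
  apply: derivable_pt_lim_eq (derivable_pt_lim_plus _ _ _ _ _ (df j Pj) IH) => //.
  by move=> s; rewrite big_cons Pj.
by apply: derivable_pt_lim_eq IH => // s; rewrite big_cons (negbTE Pj).
Qed.

Lemma derivable_pt_lim_big_mult (I : eqType) (r : seq I) (f : I -> R -> R)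
    (f' : I -> R) x :
  uniq r -> (forall i, derivable_pt_lim (f i) x (f' i)) ->
  derivable_pt_lim (fun s => \big[Rmult/1]_(i <- r) f i s) x
    (\big[Rplus/0]_(i <- r) (f' i * \big[Rmult/1]_(j <- r | j != i) f j x)).
Proof.
move=> + df; elim: r => [_|j r IH /andP[jr r_uniq]].
  by apply: (derivable_pt_lim_eq _ _ (derivable_pt_lim_const 1 x)) => [s|];
    rewrite !big_nil.
have := derivable_pt_lim_mult _ _ _ _ _ (df j) (IH r_uniq).
apply: derivable_pt_lim_eq => [s|]; first by rewrite big_cons.
have r_neq_j l : l \in r -> (l != j) = true.
  by apply: contraTT; rewrite negbK => /eqP ->.
rewrite big_cons big_cons eqxx /=; congr Rplus.
  congr Rmult; rewrite big_seq_cond [RHS]big_seq_cond; apply: eq_bigl => l.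
  by case lr: (l \in r) => //=; rewrite r_neq_j.
rewrite big_distrr /= big_seq [RHS]big_seq; apply: eq_bigr => l lr.
rewrite big_cons eq_sym r_neq_j //.
by rewrite -!Rmult_assoc (Rmult_comm (f j x)).
Qed.

Lemma derivable_pt_lim_pow_div (g : R -> R) g' x k c :
  derivable_pt_lim g x g' ->
  derivable_pt_lim (fun s => g s ^ k / c) x (INR k * g x ^ k.-1 * g' / c).
Proof.
move=> dg.
have := derivable_pt_lim_scal _ (/ c) _ _
  (derivable_pt_lim_comp _ _ _ _ _ dg (derivable_pt_lim_pow (g x) k)).
apply: derivable_pt_lim_eq => [s|];
  by rewrite /mult_real_fct /Ranalysis1.comp /Rdiv; ring.
Qed.

Lemma derivable_pt_lim_locally_zero (f : R -> R) x l eps : 0 < eps ->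
  (forall s, Rabs (s - x) < eps -> f s = 0) -> derivable_pt_lim f x l -> l = 0.
Proof.
move=> eps_gt0 f0 df; apply: uniqueness_limite df _.
apply: (derivable_pt_lim_locally_ext (fun=> 0) f x (x - eps) (x + eps)).
- by split; lra.
- by move=> s xs; rewrite f0 //; apply: Rabs_def1; lra.
- exact: derivable_pt_lim_const.
Qed.

Section SchurPolynomials.
Variable n : nat.

Definition weight N (a : {ffun 'I_n -> 'I_N}) : nat := (\sum_(i < n) i.+1 * a i)%N.

Definition schur_monomial N (a : {ffun 'I_n -> 'I_N}) (y : 'I_n -> R) : R :=
  \big[Rmult/1]_(i < n) (y i ^ a i / INR (fact (a i))).

Definition schur_sum N k (y : 'I_n -> R) : R :=
  \big[Rplus/0]_(a : {ffun 'I_n -> 'I_N} | weight a == k) schur_monomial a y.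

Lemma leq_term_weight N (a : {ffun 'I_n -> 'I_N}) (i : 'I_n) :
  (i.+1 * a i <= weight a)%N.
Proof. by rewrite /weight (bigD1 i) //= leq_addr. Qed.

Lemma leq_exponent_weight N (a : {ffun 'I_n -> 'I_N}) (i : 'I_n) : (a i <= weight a)%N.
Proof. by apply: leq_trans (leq_term_weight a i); rewrite leq_pmull. Qed.

Lemma schur_sum_widen N k y : (k < N)%N -> schur_sum N k y = schur_p k y.
Proof.
move=> k_lt_N.
pose widen (a : {ffun 'I_n -> 'I_k.+1}) := [ffun i => widen_ord k_lt_N (a i)].
pose narrow (b : {ffun 'I_n -> 'I_N}) : {ffun 'I_n -> 'I_k.+1} :=
  [ffun i => inord (b i)].
have weight_widen a : weight (widen a) = weight a.
  by apply: eq_bigr => i _; rewrite ffunE.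
have narrowK a : narrow (widen a) = a.
  by apply/ffunP => i; apply/val_inj; rewrite !ffunE /= inordK.
rewrite /schur_sum (reindex_onto widen narrow) => [|b /eqP wb]; last first.
  apply/ffunP => i; apply/val_inj; rewrite !ffunE /= inordK //.
  by rewrite ltnS -wb leq_exponent_weight.
apply: eq_big => [a|a _]; first by rewrite weight_widen narrowK eqxx andbT.
by apply: eq_bigr => i _; rewrite ffunE.
Qed.

Lemma weight_bump N (a b : {ffun 'I_n -> 'I_N}) (i : 'I_n) :
  (forall j, a j = (b j + (j == i))%N :> nat) -> weight a = (weight b + i.+1)%N.
Proof.
move=> ab; rewrite /weight; under eq_bigr do rewrite ab mulnDr.
rewrite big_split /=; congr addn.
by rewrite (bigD1 i) //= eqxx muln1 big1 ?addn0 // => j /negbTE->; rewrite muln0.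
Qed.

Definition lower_exponent k (i : 'I_n) (a : {ffun 'I_n -> 'I_k.+1}) :
  {ffun 'I_n -> 'I_k.+1} :=
  [ffun j => inord (a j - (j == i))].

Definition raise_exponent k (i : 'I_n) (a : {ffun 'I_n -> 'I_k.+1}) :
  {ffun 'I_n -> 'I_k.+1} :=
  [ffun j => inord (a j + (j == i))].

Lemma ord_subn_lt N (x : 'I_N.+1) d : (x - d < N.+1)%N.
Proof. exact: leq_ltn_trans (leq_subr _ _) (ltn_ord x). Qed.

Lemma lower_exponentE k (i : 'I_n) (a : {ffun 'I_n -> 'I_k.+1}) j :
  lower_exponent i a j = (a j - (j == i))%N :> nat.
Proof. by rewrite ffunE inordK // ord_subn_lt. Qed.

Lemma raise_lower_exponent k (i : 'I_n) (a : {ffun 'I_n -> 'I_k.+1}) :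
  (0 < a i)%N -> raise_exponent i (lower_exponent i a) = a.
Proof.
move=> ai_gt0; apply/ffunP => j; apply/val_inj.
rewrite ffunE lower_exponentE; case: eqVneq => [->|_] /=.
  by rewrite subnK // inord_val.
by rewrite subn0 addn0 inord_val.
Qed.

Lemma schur_sum_lower_exponent k (i : 'I_n) y : (i.+1 <= k)%N ->
  \big[Rplus/0]_(a : {ffun 'I_n -> 'I_k.+1} | weight a == k)
     (if (0 < a i)%N then schur_monomial (lower_exponent i a) y else 0)
  = schur_sum k.+1 (k - i.+1)%N y.
Proof.
move=> ik; rewrite -big_mkcondr /schur_sum.
rewrite [RHS](reindex_onto (lower_exponent i) (raise_exponent i)) => [|b /eqP wb].
  apply: eq_bigl => a.
  have [ai0|ai_gt0] := posnP (a i).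
    rewrite andbF; apply/esym/negbTE/negP => /andP[_ /eqP ab].
    have := congr1 (fun f : {ffun _ -> _} => nat_of_ord (f i)) ab.
    by rewrite ffunE inordK lower_exponentE eqxx ai0 //=; lia.
  have -> : weight a = (weight (lower_exponent i a) + i.+1)%N.
    apply: weight_bump => j; rewrite lower_exponentE.
    by case: eqVneq => [->|_] /=; rewrite ?subnK ?subn0 ?addn0.
  rewrite raise_lower_exponent // eqxx andbT.
  by apply/idP/idP => /eqP wa; apply/eqP; lia.
apply/ffunP => j; apply/val_inj => /=; have bj := leq_exponent_weight b j.
rewrite lower_exponentE ffunE inordK; last by case: (j == i) => /=; lia.
by rewrite addnK.
Qed.

Lemma derivable_pt_lim_schur_monomial k (a : {ffun 'I_n -> 'I_k.+1})
    (v : R -> 'I_n -> R) (v' : 'I_n -> R) x :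
  (forall i, derivable_pt_lim (fun s => v s i) x (v' i)) ->
  derivable_pt_lim (fun s => schur_monomial a (v s)) x
    (\big[Rplus/0]_(i < n)
       (v' i * (if (0 < a i)%N then schur_monomial (lower_exponent i a) (v x) else 0))).
Proof.
move=> dv.
have := derivable_pt_lim_big_mult (index_enum_uniq 'I_n)
  (fun i => derivable_pt_lim_pow_div (a i) (INR (fact (a i))) (dv i)).
apply: derivable_pt_lim_eq => // ; apply: eq_bigr => i _.
have [ai0|ai_gt0] := posnP (a i); first by rewrite ai0 /= /Rdiv; ring.
rewrite /schur_monomial [in RHS](bigD1 i) //=.
rewrite [in RHS](eq_bigr (fun j => v x j ^ a j / INR (fact (a j)))) => [|j /negbTE ji];
  last by rewrite lower_exponentE ji subn0.
rewrite lower_exponentE eqxx; move: ai_gt0; case: (nat_of_ord (a i)) => // e _.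
rewrite subn1 fact_simpl mult_INR /=.
have := INR_fact_neq_0 e; have : INR e.+1 <> 0 by apply: not_0_INR.
by move=> e1_neq0 fact_neq0; field.
Qed.

End SchurPolynomials.

(* [p_(k-d)], with the convention [p_j = 0] for [j < 0]. *)
Definition schur_pB n (k d : nat) (y : 'I_n -> R) : R :=
  if (d <= k)%N then schur_p (k - d) y else 0.

Lemma schur_p0 n (y : 'I_n -> R) : schur_p 0 y = 1.
Proof.
rewrite /schur_p (big_pred1 [ffun=> ord0]) => [|a] /=.
  by rewrite big1 // => i _; rewrite ffunE /=; field.
have -> : a = [ffun=> ord0].
  by apply/ffunP => i; apply/val_inj; rewrite ffunE; case: (a i) => -[].
by rewrite eqxx; apply/eqP; rewrite big1 // => i _; rewrite ffunE muln0.
Qed.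

Lemma schur_pB1S n i (y : 'I_n -> R) :
  schur_pB 1 i.+1 y = if (i == 0)%N then 1 else 0.
Proof. by case: i => [|i]; rewrite /schur_pB //= schur_p0. Qed.

Lemma schur_pBSS n k d (y : 'I_n -> R) : schur_pB k.+1 d.+1 y = schur_pB k d y.
Proof. by rewrite /schur_pB ltnS subSS. Qed.

Lemma derivable_pt_lim_schur_p n k (v : R -> 'I_n -> R) (v' : 'I_n -> R) x :
  (forall i, derivable_pt_lim (fun s => v s i) x (v' i)) ->
  derivable_pt_lim (fun s => schur_p k (v s)) x
    (\big[Rplus/0]_(i < n) (v' i * schur_pB k i.+1 (v x))).
Proof.
move=> dv.
have := derivable_pt_lim_big_plus (index_enum _) (P := fun a => weight a == k)
  (fun (a : {ffun 'I_n -> 'I_k.+1}) _ => derivable_pt_lim_schur_monomial a dv).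
apply: derivable_pt_lim_eq => //.
rewrite exchange_big; apply: eq_bigr => i _; rewrite -big_distrr /=; congr Rmult.
rewrite /schur_pB; case: (leqP i.+1 k) => ik.
  by rewrite schur_sum_lower_exponent // schur_sum_widen // ltnS leq_subr.
apply: big1 => a /eqP wa; case: posnP => // ai_gt0.
by have := leq_term_weight a i; rewrite wa leqNgt (leq_trans ik) ?leq_pmulr.
Qed.

Lemma derivable_pt_lim_schur_pB n k d (v : R -> 'I_n -> R) (v' : 'I_n -> R) x :
  (forall i, derivable_pt_lim (fun s => v s i) x (v' i)) ->
  derivable_pt_lim (fun s => schur_pB k d (v s)) x
    (\big[Rplus/0]_(i < n) (v' i * schur_pB k (d + i.+1) (v x))).
Proof.
move=> dv; rewrite /schur_pB; case: (leqP d k) => dk.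
  apply: derivable_pt_lim_eq (derivable_pt_lim_schur_p (k - d) dv) => //.
  by apply: eq_bigr => i _; rewrite /schur_pB leq_subRL // subnDA.
apply: (derivable_pt_lim_eq _ _ (derivable_pt_lim_const 0 x)) => //.
rewrite big1 // => i _.
by rewrite leqNgt (leq_trans dk) ?leq_addr // Rmult_0_r.
Qed.

(* [PhiD t y d] is [c_d(t, y)]. *)
Definition PhiD m n (t : 'I_m.+1 -> R) (y : 'I_n -> R) (d : nat) : R :=
  \big[Rplus/0]_(r < m.+1) (t r * schur_pB r.+1 d y).

Lemma Phi_PhiD0 m n (t : 'I_m.+1 -> R) (y : 'I_n -> R) : Phi t y = PhiD t y 0.
Proof. by apply: eq_bigr => r _; rewrite /schur_pB leq0n subn0. Qed.

Lemma derivable_pt_lim_PhiD m n d (t : R -> 'I_m.+1 -> R) (t' : 'I_m.+1 -> R)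
    (v : R -> 'I_n -> R) (v' : 'I_n -> R) x :
  (forall r, derivable_pt_lim (fun s => t s r) x (t' r)) ->
  (forall i, derivable_pt_lim (fun s => v s i) x (v' i)) ->
  derivable_pt_lim (fun s => PhiD (t s) (v s) d) x
    (\big[Rplus/0]_(r < m.+1) (t' r * schur_pB r.+1 d (v x)) +
     \big[Rplus/0]_(i < n) (v' i * PhiD (t x) (v x) (d + i.+1))).
Proof.
move=> dt dv.
have := derivable_pt_lim_big_plus (index_enum 'I_m.+1) (P := xpredT)
  (fun r _ => derivable_pt_lim_mult _ _ _ _ _ (dt r)
                (derivable_pt_lim_schur_pB r.+1 d dv)).
apply: derivable_pt_lim_eq => //; rewrite big_split /=; congr Rplus.
under [RHS]eq_bigr do rewrite big_distrr /=.
rewrite [RHS]exchange_big /=; apply: eq_bigr => r _.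
by rewrite big_distrr /=; apply: eq_bigr => i _; ring.
Qed.

Lemma upd_same d (y : 'I_d -> R) i : upd y i (y i) = y.
Proof. by apply: functional_extensionality => j; rewrite /upd; case: eqP => // ->. Qed.

Lemma derivable_pt_lim_upd d (y : 'I_d -> R) i j x :
  derivable_pt_lim (fun s => upd y i s j) x (if j == i then 1 else 0).
Proof.
rewrite /upd; case: (j == i).
  exact: derivable_pt_lim_id.
exact: derivable_pt_lim_const.
Qed.

Lemma big_delta d (F : 'I_d -> R) i :
  \big[Rplus/0]_(j < d) ((if j == i then 1 else 0) * F j) = F i.
Proof. by rewrite (bigD1 i) //= eqxx big1 => [|j /negbTE->]; ring. Qed.

Lemma partial_PhiD m n (t : 'I_m.+1 -> R) (y : 'I_n -> R) d i :
  is_partial (fun z => PhiD t z d) i y (PhiD t y (d + i.+1)).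
Proof.
have := derivable_pt_lim_PhiD d (fun r => derivable_pt_lim_const (t r) (y i))
  (fun j => derivable_pt_lim_upd y i j (y i)).
apply: derivable_pt_lim_eq => //.
by rewrite big1 => [|r _]; rewrite ?Rplus_0_l ?upd_same ?big_delta ?Rmult_0_l.
Qed.

Lemma partial_Phi_PhiD m n (t : 'I_m.+1 -> R) (y : 'I_n -> R) i l :
  is_partial (Phi t) i y l -> l = PhiD t y i.+1.
Proof.
have := partial_PhiD t y 0 i; rewrite add0n.
rewrite (functional_extensionality _ _ (Phi_PhiD0 t)).
by move=> dPhiD dl; apply: uniqueness_limite dl dPhiD.
Qed.

Lemma hessian_Phi_PhiD m n (t : 'I_m.+1 -> R) (g : ('I_n -> R) -> R) y i j l :
  (forall z, is_partial (Phi t) j z (g z)) -> is_partial g i y l ->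
  l = PhiD t y (i.+1 + j.+1).
Proof.
move=> dPhi dg.
have gE : g = fun z => PhiD t z j.+1.
  by apply: functional_extensionality => z; apply: partial_Phi_PhiD.
rewrite gE in dg; rewrite addnC.
exact: uniqueness_limite _ _ _ _ dg (partial_PhiD t y j.+1 i).
Qed.

Definition hankel n (c : nat -> R) (w : 'I_n -> R) (i : 'I_n) : R :=
  \big[Rplus/0]_(j < n) (w j * c (i.+1 + j.+1)%N).

Definition toeplitz n (a : nat -> R) (x : 'I_n -> R) (i : 'I_n) : R :=
  \big[Rplus/0]_(j < n) ((if (i <= j)%N then a (j - i)%N else 0) * x j).

Lemma hankel_toeplitz_entry n (c a : nat -> R) (i l : 'I_n) :
  \big[Rplus/0]_(j < n) ((if (j <= l)%N then a (l - j)%N else 0) * c (i.+1 + j.+1)%N)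
  = \big[Rplus/0]_(0 <= d < l.+1) (a d * c (i + l + 2 - d)%N).
Proof.
pose F j := (if (j <= l)%N then a (l - j)%N else 0) * c (i.+1 + j.+1)%N.
rewrite -(big_mkord xpredT F) (big_cat_nat (n := l.+1)) //= [X in _ + X]big1_seq.
  rewrite Rplus_0_r big_nat_rev /= add0n; apply: eq_big_nat => j /andP[_ jl].
  by rewrite /F subSS leq_subr; congr (a _ * c _); lia.
move=> j /andP[_]; rewrite mem_index_iota => /andP[lj _].
by rewrite /F leqNgt lj Rmult_0_l.
Qed.

Section HankelSystem.
Variables (n : nat) (c : nat -> R).
Hypothesis c_eq0 : forall d, (0 < d <= n)%N -> c d = 0.
Hypothesis c_neq0 : c n.+1 <> 0.

(* [hankel c] times [toeplitz a] is symmetric: the terms that break the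
   symmetry involve only the [c d] with [0 < d <= n]. *)
Lemma hankel_toeplitz_sym a (i l : 'I_n) :
  \big[Rplus/0]_(j < n) ((if (j <= l)%N then a (l - j)%N else 0) * c (i.+1 + j.+1)%N)
  = \big[Rplus/0]_(j < n) ((if (j <= i)%N then a (i - j)%N else 0) * c (l.+1 + j.+1)%N).
Proof.
wlog il : i l / (i <= l)%N.
  by move=> sym; case: (leqP i l) => [|/ltnW] /sym.
rewrite !hankel_toeplitz_entry (big_cat_nat (n := i.+1)) //= [X in _ + X]big1_seq.
  by rewrite Rplus_0_r; apply: eq_big_nat => d _; congr (a _ * c _); lia.
move=> d /andP[_]; rewrite mem_index_iota => /andP[id dl].
by rewrite c_eq0 ?Rmult_0_r //; have := ltn_ord l; lia.
Qed.

Lemma hankel_eq0 (w : 'I_n -> R) :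
  (forall i, hankel c w i = 0) -> forall j, w j = 0.
Proof.
move=> hw; suff top p (j : 'I_n) : (n - p <= j)%N -> w j = 0.
  by move=> j; apply: (top n); rewrite subnn.
elim: p j => [|p IH] j jp; first by move: jp; rewrite subn0 leqNgt ltn_ord.
case: (leqP (n - p) j) => [|j_lt]; first exact: IH.
have jn := ltn_ord j; have pn : (p < n)%N by lia.
have := hw (Ordinal pn); rewrite /hankel (bigD1 j) //= big1 => [|l /eqP lj].
  rewrite Rplus_0_r => /Rmult_integral[//|cj0]; case: c_neq0.
  by rewrite -cj0; congr c; lia.
case: (leqP (n - p) l) => [/IH->|l_lt]; first by rewrite Rmult_0_l.
rewrite c_eq0 ?Rmult_0_r //; have := ltn_ord l.
have : nat_of_ord l <> nat_of_ord j by move=> /val_inj.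
lia.
Qed.

Lemma hankel_toeplitz a (x : 'I_n -> R) i :
  hankel c (toeplitz a x) i =
  \big[Rplus/0]_(j < n) ((if (j <= i)%N then a (i - j)%N else 0) * hankel c x j).
Proof.
transitivity (\big[Rplus/0]_(l < n) (x l *
    \big[Rplus/0]_(j < n)
      ((if (j <= l)%N then a (l - j)%N else 0) * c (i.+1 + j.+1)%N))).
  rewrite /hankel /toeplitz; under eq_bigr do rewrite big_distrl /=.
  rewrite exchange_big /=; apply: eq_bigr => l _; rewrite big_distrr /=.
  by apply: eq_bigr => j _; ring.
under eq_bigr do rewrite hankel_toeplitz_sym big_distrr /=.
rewrite exchange_big /=; apply: eq_bigr => j _; rewrite /hankel big_distrr /=.
by apply: eq_bigr => l _; rewrite addnC; ring.
Qed.

Lemma toeplitz_solve (a : nat -> R) (x y : 'I_n -> R) :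
  (forall i : 'I_n, hankel c x i = if (i == 0 :> nat)%N then -1 else 0) ->
  (forall i : 'I_n, hankel c y i = - a i) ->
  forall i, y i = toeplitz a x i.
Proof.
move=> hx hy i; apply: Rminus_diag_uniq; move: i; apply: hankel_eq0 => i.
have hz : hankel c (toeplitz a x) i = - a i.
  have n_gt0 : (0 < n)%N by apply: leq_ltn_trans (ltn_ord i).
  rewrite hankel_toeplitz (bigD1 (Ordinal n_gt0)) //= hx subn0 big1 => [|j j_neq0].
    by rewrite /=; ring.
  rewrite hx; case: eqP => [j0|_]; last by rewrite Rmult_0_r.
  by case/eqP: j_neq0; apply: val_inj.
have : hankel c y i =
  hankel c (fun j => y j - toeplitz a x j) i + hankel c (toeplitz a x) i.
  by rewrite /hankel -big_split /=; apply: eq_bigr => j _; ring.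
by rewrite hy hz; lra.
Qed.

End HankelSystem.

Section CriticalCurve.
Variables (m n : nat) (U : ('I_m.+1 -> R) -> Prop) (u : ('I_m.+1 -> R) -> 'I_n -> R).
Variable Du : 'I_m.+1 -> ('I_m.+1 -> R) -> 'I_n -> R.
Hypothesis U_open : is_open U.
Hypothesis u_partial : forall k t i, U t -> is_partial (fun s => u s i) k t (Du k t i).
Hypothesis u_critical : forall t, U t -> forall i, is_partial (Phi t) i (u t) 0.

Lemma PhiD_critical t : U t -> forall d, (0 < d <= n)%N -> PhiD t (u t) d = 0.
Proof.
move=> Ut d /andP[d_gt0 dn]; have dn' : (d.-1 < n)%N by rewrite prednK.
by rewrite -(prednK d_gt0) -[d.-1]/(nat_of_ord (Ordinal dn'))
  -(partial_Phi_PhiD (u_critical Ut _)).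
Qed.

Lemma hankel_Du k t i : U t ->
  hankel (PhiD t (u t)) (Du k t) i = - schur_pB k.+1 i.+1 (u t).
Proof.
move=> Ut.
have := derivable_pt_lim_PhiD i.+1 (fun r => derivable_pt_lim_upd t k r (t k))
  (v := fun s => u (upd t k s)) (fun j => u_partial k j Ut).
rewrite upd_same big_delta => /(derivable_pt_lim_locally_zero _ _) D0.
have [eps [eps_gt0 ball_U]] := U_open Ut.
suff : schur_pB k.+1 i.+1 (u t) + hankel (PhiD t (u t)) (Du k t) i = 0 by lra.
apply: (D0 eps eps_gt0) => s ts; apply: PhiD_critical; last exact: ltn_ord.
apply: ball_U => r; rewrite /upd; case: eqP => [->|_] //.
by rewrite Rminus_diag Rabs_R0.
Qed.

End CriticalCurve.

(* Only partial derivatives along coordinate lines are used, so the continuity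
   hypothesis [hDu_cont] is not needed; for [k = 0] the statement holds with
   [A_0 = 1], so neither is [1 <= k]. *)
Theorem mainTheorem3
  (n m : nat) (hn : (0 < n)%N)
  (U : ('I_m.+1 -> R) -> Prop) (hU : is_open U)
  (u : ('I_m.+1 -> R) -> 'I_n -> R)
  (Du : 'I_m.+1 -> ('I_m.+1 -> R) -> 'I_n -> R)
  (hDu : forall (k : 'I_m.+1) t (i : 'I_n), U t ->
           is_partial (fun s => u s i) k t (Du k t i))
  (hDu_cont : forall (k : 'I_m.+1) (i : 'I_n), cont_on U (fun t => Du k t i))
  (hcrit : forall t, U t -> forall i : 'I_n,
             is_partial (Phi t) i (u t) 0)
  (hhess : forall t, U t -> forall i j : 'I_n, (n < i.+1 + j.+1)%N ->
             exists (g : ('I_n -> R) -> R) (l : R),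
               (forall y, is_partial (Phi t) j y (g y)) /\
               is_partial g i (u t) l /\ l <> 0) :
  forall k : 'I_m.+1, (1 <= k)%N ->
  forall t, U t -> forall i : 'I_n,
    Du k t i = \big[Rplus/0]_(j < n) (Amat k (u t) i j * Du ord0 t j).
Proof.
move=> k _ t Ut i.
have hankel_top : PhiD t (u t) n.+1 <> 0.
  have n1_lt_n : (n.-1 < n)%N by rewrite prednK.
  have antidiag : (n < (Ordinal hn).+1 + (Ordinal n1_lt_n).+1)%N.
    by rewrite /= add1n prednK.
  have [g [l [dPhi [dg l_neq0]]]] := hhess t Ut _ _ antidiag.
  by rewrite (hessian_Phi_PhiD dPhi dg) /= add1n prednK in l_neq0.
rewrite (toeplitz_solve (PhiD_critical hcrit Ut) hankel_top
           (x := Du ord0 t) (y := Du k t) (a := fun d => schur_pB k d (u t))).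
- by apply: eq_bigr => j _; rewrite /Amat /schur_pB; case: (i <= j)%N.
- by move=> j; rewrite (hankel_Du hU hDu hcrit) // schur_pB1S; case: eqP; lra.
- by move=> j; rewrite (hankel_Du hU hDu hcrit) // schur_pBSS.
Qed.
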